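(* Let $n\ge 6$ be divisible by $6$, let $C_n$ be the cycle on $n$ vertices, let $\widehat{C}_n$ be obtained from $C_n$ by attaching a distinct new pendant vertex (leaf) to every vertex of $C_n$, and let $H_n$ be obtained from $\widehat{C}_n$ by replacing every such leaf by a copy of the subdivided $K_4$, i.e. identifying each leaf with the subdivision vertex of a new copy of the subdivided $K_4$. Then $\dfrac{Z(H_n)}{|V(H_n)|}\ge \dfrac{5}{12}$.
   Context: Zero forcing: given a graph and a set $S$ of vertices initially colored black (all others white), repeatedly apply the rule: if a black vertex $v$ has exactly one white neighbor $u$, then $u$ becomes black. $S$ is a zero forcing set if eventually every vertex becomes black. $Z(G)$ is the minimum size of a zero forcing set of $G$. Subdivided $K_4$: the complete graph on 4 vertices $a,b,c,e$ with the edge $ab$ subdivided by a new vertex $s$ (5 vertices, edges $as, sb, ac, ae, bc, be, ce$); $s$ is its subdivision vertex. *)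

From HB Require Import structures.
From mathcomp Require Import all_boot all_order all_algebra.
Set Implicit Arguments. Unset Strict Implicit. Unset Printing Implicit Defensive.

Definition zf_step (T : finType) (adj : rel T) (S : {set T}) (X : {set T})
  : {set T} :=
  S :|: [set u | [exists v, [&& v \in X, adj v u &
                   [forall w, (adj v w && (w != u)) ==> (w \in X)]]]].

Definition zf_closure (T : finType) (adj : rel T) (S : {set T}) : {set T} :=
  fixset (zf_step adj S).

Definition zero_forcing_set (T : finType) (adj : rel T) (S : {set T}) : bool :=
  zf_closure adj S == [set: T].

(* Zero forcing number Z(G): minimum size of a zero forcing set
   ([set: T] is always one, so #|T| is a valid default). *)
Definition zf_number (T : finType) (adj : rel T) : nat :=
  \big[minn/#|T|]_(S : {set T} | zero_forcing_set adj S) #|S|.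

(** Vertex (i, k) with i : 'I_n, k : 'I_6:
      k = 0 : vertex i of the cycle C_n
      k = 1 : subdivision vertex s of the i-th subdivided K_4
              (identified with the leaf attached to cycle vertex i)
      k = 2,3,4,5 : vertices a, b, c, e of the i-th subdivided K_4,
              whose edges are  as, sb, ac, ae, bc, be, ce. *)
Definition Hn_vertex (n : nat) : finType := ('I_n * 'I_6)%type.

Definition gadget_edge (k l : nat) : bool :=
  [|| (k == 0) && (l == 1),
      (k == 1) && (l == 2),
      (k == 1) && (l == 3),
      (k == 2) && (l == 4),
      (k == 2) && (l == 5),
      (k == 3) && (l == 4),
      (k == 3) && (l == 5)  |
      (k == 4) && (l == 5) ].

Definition Hn_adj (n : nat) : rel (Hn_vertex n) :=
  fun x y =>
    let: (i, k) := x in let: (j, l) := y in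
    [|| [&& k == 0 :> nat, l == 0 :> nat &
           ((i.+1 %% n == j) || (j.+1 %% n == i))],
        (i == j) && gadget_edge k l |
        (i == j) && gadget_edge l k ].

From mathcomp Require Import all_boot all_algebra.
From mathcomp Require Import zify ring lra.
Set Implicit Arguments. Unset Strict Implicit. Unset Printing Implicit Defensive.
Import GRing.Theory Num.Theory.

(* A fort is a nonempty set F such that no vertex outside F has exactly one
   neighbour in F; every zero forcing set meets every fort.  Each row of H_n
   (a cycle vertex with its gadget) contains the forts {a, b} and {c, e}, so a
   zero forcing set S has at least two vertices per row, and exactly two in a
   "thin" row.  If the thin rows contain a zigzag i, i+1, i+3, ..., i+2m+1,
   i+2m+2 of the cycle, then the cycle vertices at the odd offsets together
   with s and the S-free vertex of each twin pair in the zigzag rows form a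
   fort avoiding S.  A potential argument shows that a zigzag-free set of
   positions on an even cycle of length n has at most n/2 elements, whence
   |S| >= 3n - n/2 = 5n/2 = (5/12) |V(H_n)|. *)

Section Forts.
Variables (T : finType) (adj : rel T).

Definition fort (F : {set T}) : Prop :=
  forall x u, x \notin F -> u \in F -> adj x u ->
    exists2 w, w \in F & (w != u) && adj x w.

Lemma zf_step_disjoint_fort (F S X : {set T}) : fort F ->
  [disjoint F & S] -> [disjoint F & X] -> [disjoint F & zf_step adj S X].
Proof.
move=> fortF FS FX; rewrite disjoints_subset; apply/subsetP=> z zF.
rewrite !inE negb_or (disjointFr FS zF) /=; apply/existsP=> -[v /and3P[vX vz]].
have vF : v \notin F by apply: contraTN vX => vF; rewrite (disjointFr FX).
have [w wF /andP[wz vw]] := fortF v z vF zF vz.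
by move/forallP/(_ w); rewrite vw wz (disjointFr FX wF).
Qed.

Lemma zero_forcing_set_meets_fort (F S : {set T}) : fort F ->
  zero_forcing_set adj S -> F != set0 -> ~~ [disjoint F & S].
Proof.
move=> fortF /eqP closedS; apply: contraNN => FS.
suff : [disjoint F & zf_closure adj S] by rewrite closedS disjoints_subset setCT subset0.
rewrite /zf_closure /fixset; elim: #|T| => [|k IH] /=.
  by rewrite disjoints_subset setC0 subsetT.
exact: zf_step_disjoint_fort.
Qed.

Lemma fort_twins y z : y != z ->
  (forall x, x != y -> x != z -> adj x y = adj x z) -> fort [set y; z].
Proof.
move=> yz twin x u; rewrite !inE negb_or => /andP[xy xz] /orP[]/eqP-> xu.
  by exists z; rewrite ?inE ?eqxx ?orbT // eq_sym yz -(twin x).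
by exists y; rewrite ?inE ?eqxx // yz (twin x).
Qed.

Lemma zero_forcing_set_meets_twins S y z : y != z ->
  (forall x, x != y -> x != z -> adj x y = adj x z) ->
  zero_forcing_set adj S -> (y \in S) || (z \in S).
Proof.
move=> yz twin zfS.
have yz_gt0 : [set y; z] != set0 by apply/set0Pn; exists y; rewrite !inE eqxx.
have /pred0Pn[x /andP[]] := zero_forcing_set_meets_fort (fort_twins yz twin) zfS yz_gt0.
by rewrite !inE => /orP[]/eqP-> ->; rewrite ?orbT.
Qed.
End Forts.

Section ZigzagCount.
Variables (n : nat) (G : nat -> bool).
Hypothesis G_periodic : forall x, G (x + n) = G x.
Hypothesis n_gt1 : 1 < n.
Hypothesis n_even : ~~ odd n.

Definition zigzag i m :=
  [/\ G i, forall t, t <= m -> G (i + t.*2.+1) & G (i + m.*2.+2)].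

Hypothesis no_zigzag : forall i m, m.*2.+2 <= n -> ~ zigzag i m.

Definition chain i d := G i && [forall o : 'I_n, odd o && (o <= d) ==> G (i + o)].

Definition chain_tip j := [exists d : 'I_n, (0 < d) && chain (j + n - d) d].

Lemma chainP i d : d < n ->
  reflect (G i /\ forall o, odd o -> o <= d -> G (i + o)) (chain i d).
Proof.
move=> dn; apply: (iffP andP) => -[Gi Godd]; split=> //.
  move=> o oo od; have /implyP := forallP Godd (Ordinal (leq_ltn_trans od dn)).
  by apply; rewrite oo.
by apply/forallP=> o; apply/implyP=> /andP[]; apply: Godd.
Qed.

(* Otherwise i, the odd offsets up to d and the offset d + odd d form a zigzag. *)
Lemma chain_stop i d : 0 < d < n -> chain i d -> G (i + d + odd d) = false.
Proof.
case/andP=> d0 dn /(chainP _ dn)[Gi Godd]; apply/negP=> Gend.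
have [k dE] : exists k, d + odd d = k.*2.+2.
  have := odd_double_half d; case: (odd d) => /= dE.
    by exists d./2; lia.
  by exists d./2.-1; lia.
apply: (no_zigzag (i := i) (m := k)); first by move: dE; case: (odd d) => /=; lia.
split=> // [t tk|]; last by rewrite -dE addnA.
apply: Godd; first by rewrite /= odd_double.
by move: dE; case: (odd d) => /=; lia.
Qed.

Lemma chain_tip_gap j : chain_tip j -> ~~ (G j && G j.+1).
Proof.
case/existsP=> -[d dn] /= /andP[d0 ch].
have := chain_stop (d := d) _ ch; rewrite d0 dn => /(_ isT).
have -> : j + n - d + d = j + n by lia.
case: (odd d) => /= Gend.
  by rewrite addn1 -addSn G_periodic in Gend; rewrite Gend andbF.
by rewrite addn0 G_periodic in Gend; rewrite Gend.
Qed.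

Lemma chain_tip_pair j : G j -> G j.+1 -> chain_tip j.+1.
Proof.
move=> Gj Gj1; apply/existsP; exists (Ordinal n_gt1) => /=.
have -> : j.+1 + n - 1 = j + n by lia.
apply/chainP=> //; rewrite G_periodic; split=> // o oo o1.
have -> : o = 1 by move: oo o1; case: o => [|[|]].
by rewrite addn1 -addSn G_periodic.
Qed.

Lemma chain_tip_succ j : G j != G j.+1 -> chain_tip j -> chain_tip j.+1.
Proof.
move=> Gjj /existsP[[d dn] /= /andP[d0 ch]].
have [Gi Godd] := chainP _ dn ch.
set i := j + n - d in ch Gi Godd *.
have iE : i + d = j + n by rewrite /i; lia.
have Gtip : G (i + d) = G j by rewrite iE G_periodic.
have [dn1|nd] := ltnP d.+1 n; last first.
  have nE : n = d.+1 by lia.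
  have od : odd d by move: n_even; rewrite nE negbK.
  have Gj1 : G j.+1 = G i by rewrite /i; congr G; lia.
  by move: Gjj; rewrite -Gtip Gj1 Gi (Godd d od).
apply/existsP; exists (Ordinal dn1) => /=.
have -> : j.+1 + n - d.+1 = i by rewrite /i; lia.
apply/chainP=> //; split=> // o oo od1.
move: od1; rewrite leq_eqVlt => /orP[/eqP oE|od]; last exact: Godd.
have ev : odd d = false by move: oo; rewrite oE /= => /negbTE.
have := chain_stop (d := d) _ ch; rewrite d0 dn ev addn0 Gtip => /(_ isT) Gj.
by move: Gjj; rewrite Gj oE -G_periodic addnS iE -addSn; case: G.
Qed.

(* Summed over a period, this telescopes to the bound [zigzag_free_count]. *)
Lemma chain_tip_potential j :
  G j + G j.+1 + chain_tip j <= 1 + chain_tip j.+1.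
Proof.
have tip_succ := @chain_tip_succ j.
case Gj: (G j); case Gj1: (G j.+1) => /=; rewrite ?add0n ?leq_add2l;
  last by case: chain_tip.
  have := @chain_tip_gap j; rewrite Gj Gj1 (chain_tip_pair Gj Gj1).
  by case: chain_tip => // /(_ isT).
all: by move: tip_succ; rewrite Gj Gj1 => /(_ isT); case: chain_tip => // /(_ isT) ->.
Qed.

Lemma chain_tip_periodic j : chain_tip (j + n) = chain_tip j.
Proof.
apply: eq_existsb => d; congr (_ && _).
have -> : j + n + n - d = j + n - d + n by have := ltn_ord d; lia.
rewrite /chain G_periodic; congr (_ && _); apply: eq_forallb => o.
by rewrite addnAC G_periodic.
Qed.

Lemma sum_periodic_succ (f : nat -> nat) : (forall x, f (x + n) = f x) ->
  \sum_(j < n) f j.+1 = \sum_(j < n) f j.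
Proof.
move=> f_periodic; case: n n_gt1 f_periodic => [//|n'] _ f_periodic.
by rewrite big_ord_recr big_ord_recl /= addnC -(f_periodic 0).
Qed.

Lemma zigzag_free_count : (\sum_(j < n) G j).*2 <= n.
Proof.
have : \sum_(j < n) (G j + G j.+1 + chain_tip j) <= \sum_(j < n) (1 + chain_tip j.+1).
  by apply: leq_sum => j _; exact: chain_tip_potential.
rewrite !big_split /= (sum_periodic_succ (f := fun j => G j : nat)); last first.
  by move=> x; rewrite G_periodic.
rewrite (sum_periodic_succ (f := fun j => chain_tip j : nat)); last first.
  by move=> x; rewrite chain_tip_periodic.
by rewrite sum1_card card_ord addnn leq_add2r.
Qed.
End ZigzagCount.

Definition k_cyc : 'I_6 := @Ordinal 6 0 isT.
Definition k_s : 'I_6 := @Ordinal 6 1 isT.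
Definition k_a : 'I_6 := @Ordinal 6 2 isT.
Definition k_b : 'I_6 := @Ordinal 6 3 isT.
Definition k_c : 'I_6 := @Ordinal 6 4 isT.
Definition k_e : 'I_6 := @Ordinal 6 5 isT.

Lemma ord6_ind (P : 'I_6 -> Prop) :
  P k_cyc -> P k_s -> P k_a -> P k_b -> P k_c -> P k_e -> forall k, P k.
Proof.
by move=> ? ? ? ? ? ? [[|[|[|[|[|[|k]]]]]] hk] //; rewrite (bool_irrelevance hk isT).
Qed.

Section Gadgets.
Variables (n : nat) (S : {set Hn_vertex n}).
Local Notation adj := (@Hn_adj n).
Hypothesis zfS : zero_forcing_set adj S.

Lemma Hn_twins_ab p (x : Hn_vertex n) : x != (p, k_a) -> x != (p, k_b) ->
  adj x (p, k_a) = adj x (p, k_b).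
Proof.
by case: x => q [[|[|[|[|[|[|k]]]]]] hk].
Qed.

Lemma Hn_twins_ce p (x : Hn_vertex n) : x != (p, k_c) -> x != (p, k_e) ->
  adj x (p, k_c) = adj x (p, k_e).
Proof.
by case: x => q [[|[|[|[|[|[|k]]]]]] hk] //=; rewrite !xpair_eqE; case: (q == p).
Qed.

Lemma zero_forcing_set_meets_gadget p :
  ((p, k_a) \in S) || ((p, k_b) \in S) /\ ((p, k_c) \in S) || ((p, k_e) \in S).
Proof.
by split; apply: zero_forcing_set_meets_twins zfS;
  rewrite ?xpair_eqE ?andbF // => x; [apply: Hn_twins_ab | apply: Hn_twins_ce].
Qed.

Definition row_count p := \sum_(k < 6) ((p, k) \in S : nat).

Definition thin_row p := row_count p <= 2.

Lemma row_countE p : row_count p = ((p, k_cyc) \in S) + ((p, k_s) \in S)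
  + ((p, k_a) \in S) + ((p, k_b) \in S) + ((p, k_c) \in S) + ((p, k_e) \in S).
Proof.
rewrite /row_count !big_ord_recl big_ord0 addn0 !addnA.
by do 6 (congr (_ + _) || (congr (_ \in S); congr pair; apply: val_inj)).
Qed.

Lemma card_row_count : #|S| = \sum_(p < n) row_count p.
Proof.
rewrite /row_count pair_bigA /= -sum1_card big_mkcond /=.
by apply: eq_bigr => -[p k] _; case: (_ \in S).
Qed.

Lemma row_count_thin p : 3 <= row_count p + thin_row p.
Proof.
rewrite /thin_row row_countE; have [] := zero_forcing_set_meets_gadget p.
by do 6 case: (_ \in S).
Qed.

Lemma thin_rowP p : thin_row p ->
  [/\ (p, k_cyc) \notin S, (p, k_s) \notin S,
      ~~ (((p, k_a) \in S) && ((p, k_b) \in S)) &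
      ~~ (((p, k_c) \in S) && ((p, k_e) \in S))].
Proof.
rewrite /thin_row row_countE; have [] := zero_forcing_set_meets_gadget p.
by do 6 case: (_ \in S).
Qed.
End Gadgets.

Section HnForts.
Variable n : nat.
Local Notation N := n.+3.
Local Notation V := (Hn_vertex N).
Local Notation adj := (@Hn_adj N).
Local Open Scope ring_scope.

Lemma cycle_succE (p q : 'I_N) : (p.+1 %% N == q)%N = (q == p + 1).
Proof. by rewrite eq_sym -val_eqE /= (@modn_small 1) // addn1. Qed.

Lemma cycle_adjE (p q : 'I_N) :
  ((p.+1 %% N == q) || (q.+1 %% N == p))%N = (q == p + 1) || (q == p - 1).
Proof. by rewrite !cycle_succE; congr (_ || _); rewrite -subr_eq eq_sym. Qed.

Lemma Hn_adj_cycle (p q : 'I_N) l : adj (p, k_cyc) (q, l) =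
  (l == k_cyc) && ((q == p + 1) || (q == p - 1)) || (q == p) && (l == k_s).
Proof.
rewrite /Hn_adj cycle_adjE (eq_sym p).
by case: l => [[|[|[|[|[|[|l]]]]]] hl]; rewrite /= ?andbF ?orbF ?andbT.
Qed.

Lemma Hn_adj_gadget (p q : 'I_N) k l : k != k_cyc ->
  adj (p, k) (q, l) = (q == p) && (gadget_edge k l || gadget_edge l k).
Proof.
by case: k => [[|[|[|[|[|[|k]]]]]] hk] //= _; rewrite -andb_orr (eq_sym p).
Qed.

(* The cycle vertices in C, and for each row in R the vertex s together with
   one vertex of each twin pair {a, b}, {c, e}, chosen outside S if possible. *)
Definition rows_fort (S : {set V}) (C R : pred 'I_N) : {set V} :=
  [set x | let: (p, k) := x in
     match val k with
     | 0 => C p | 1 => R p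
     | 2 => R p && ((p, k_a) \notin S) | 3 => R p && ((p, k_a) \in S)
     | 4 => R p && ((p, k_c) \notin S) | _ => R p && ((p, k_c) \in S)
     end].

Lemma rows_fort_gadget S C R p k l : {subset C <= R} -> k != k_cyc ->
  (p, k) \notin rows_fort S C R -> (p, l) \in rows_fort S C R ->
  gadget_edge k l || gadget_edge l k ->
  exists2 w, (p, w) \in rows_fort S C R & (w != l) && (gadget_edge k w || gadget_edge w k).
Proof.
move=> CR kc; rewrite !inE => xF uF kl.
have Rp : R p.
  by move: uF; case: l {kl} => [[|[|[|[|[|[|l]]]]]] hl] //=; first [exact: CR | case/andP].
move: xF uF kl; rewrite Rp /=.
case hA: ((p, k_a) \in S); case hC: ((p, k_c) \in S);
case: k kc => [[|[|[|[|[|[|k]]]]]] hk] //= _; case: l => [[|[|[|[|[|[|l]]]]]] hl] //= _ _ _.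
all: first [ by exists k_s; rewrite ?inE /= ?Rp ?hA ?hC
            | by exists k_a; rewrite ?inE /= ?Rp ?hA ?hC
            | by exists k_b; rewrite ?inE /= ?Rp ?hA ?hC
            | by exists k_c; rewrite ?inE /= ?Rp ?hA ?hC
            | by exists k_e; rewrite ?inE /= ?Rp ?hA ?hC ].
Qed.

Lemma succ_neq_pred (p : 'I_N) : p + 1 != p - 1.
Proof.
apply/eqP=> e; have : (2%:R : 'I_N) = 0 by rewrite -(subrr (p - 1)) -{1}e; ring.
by rewrite Zp_nat => /(congr1 val); rewrite /= modn_small.
Qed.

Lemma rows_fortP S C R : {subset C <= R} ->
  (forall p, ~~ C p -> R p -> C (p + 1) || C (p - 1)) ->
  (forall p, ~~ R p -> C (p + 1) = C (p - 1)) ->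
  fort adj (rows_fort S C R).
Proof.
move=> CR Cnear Cbal [p k] [q l] xF uF.
have [kE|kc] := eqVneq k k_cyc; last first.
  rewrite Hn_adj_gadget // => /andP[/eqP qp kl]; subst q.
  have [w wF wl] := rows_fort_gadget CR kc xF uF kl.
  by exists (p, w); rewrite // xpair_eqE Hn_adj_gadget // eqxx.
subst k.
have nCp : ~~ C p by move: xF; rewrite inE.
rewrite Hn_adj_cycle => /orP[/andP[/eqP lE qp]|/andP[/eqP qE /eqP lE]]; subst l.
  have Cq : C q by move: uF; rewrite inE.
  case: (boolP (R p)) => Rp.
    by exists (p, k_s); rewrite ?inE // xpair_eqE Hn_adj_cycle !eqxx orbT andbF.
  have := Cbal p Rp; case/orP: qp => /eqP qE; subst q => Cpm.
    exists (p - 1, k_cyc); first by rewrite inE /= -Cpm.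
    by rewrite xpair_eqE Hn_adj_cycle eq_sym (negbTE (succ_neq_pred p)) !eqxx orbT.
  exists (p + 1, k_cyc); first by rewrite inE /= Cpm.
  by rewrite xpair_eqE Hn_adj_cycle (negbTE (succ_neq_pred p)) !eqxx.
subst q; have Rp : R p by move: uF; rewrite inE.
case/orP: (Cnear p nCp Rp) => Cpm; [exists (p + 1, k_cyc) | exists (p - 1, k_cyc)];
  by rewrite ?inE // xpair_eqE Hn_adj_cycle !eqxx /= ?andbF ?orbT.
Qed.

Lemma rows_fort_disjoint S C R : zero_forcing_set adj S -> {subset C <= R} ->
  (forall p, R p -> thin_row S p) -> [disjoint rows_fort S C R & S].
Proof.
move=> zfS CR Rthin; rewrite disjoints_subset; apply/subsetP=> -[p k]; rewrite !inE.
elim/ord6_ind: k => /=.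
- by move/CR/Rthin/(thin_rowP zfS) => -[].
- by move/Rthin/(thin_rowP zfS) => -[].
- by case/andP.
- by case/andP=> /Rthin/(thin_rowP zfS)[_ _ + _] inA; rewrite inA.
- by case/andP.
- by case/andP=> /Rthin/(thin_rowP zfS)[_ _ _ +] inC; rewrite inC.
Qed.

End HnForts.

Lemma modn_succ_cases m d : m < d -> m.+1 %% d = m.+1 \/ m.+1 = d /\ m.+1 %% d = 0.
Proof.
by move=> md; case: (ltngtP m.+1 d) => h; [left; rewrite modn_small | lia | right; rewrite h modnn].
Qed.

(* b, a and c are the offsets of p - 1, p and p + 1 from the start of the segment. *)
Lemma segment_offsets (N m b : nat) : m.*2.+2 <= N -> b < N ->
  let D x := odd x && (x <= m.*2.+1) in
  let a := b.+1 %% N in let c := a.+1 %% N in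
  let J := [|| D a, a == 0 | a == m.*2.+2 %% N] in
  (~~ D a -> J -> D c || D b) /\ (~~ J -> D c = D b).
Proof.
move=> hm bN D a c J; rewrite /J /D.
have aN : a < N by rewrite ltn_pmod //; lia.
have := modn_succ_cases bN; have := modn_succ_cases aN; have := modn_succ_cases hm.
rewrite -/a -/c; move: (m.*2.+2 %% N) => M; clearbody c a.
case=> [->|[? ->]]; case=> [->|[? ->]]; case=> [aE|[? aE]]; subst a => /=.
all: have := odd_double_half b; case: (odd b) => /= hb; split; lia.
Qed.

Section Segments.
Variables (n i m : nat).
Local Notation N := n.+3.
Local Notation adj := (@Hn_adj N).
Local Open Scope ring_scope.

Hypothesis m_small : (m.*2.+2 <= N)%N.
Local Notation r := (inZp i : 'I_N).
Local Notation off p := (val (p - r)).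

Definition segment_cycle (p : 'I_N) := odd (off p) && (off p <= m.*2.+1)%N.
Definition segment_rows (p : 'I_N) := [|| segment_cycle p, off p == 0%N | off p == (m.*2.+2 %% N)%N].

Lemma off_succ p : off (p + 1) = ((off p).+1 %% N)%N.
Proof. by rewrite addrAC /= (@modn_small 1) // addn1. Qed.

Lemma segment_cycle_sub_rows : {subset segment_cycle <= segment_rows}.
Proof. by move=> p; rewrite !unfold_in /segment_rows /segment_cycle => ->. Qed.

Lemma segment_fort S : fort adj (rows_fort S segment_cycle segment_rows).
Proof.
apply: rows_fortP segment_cycle_sub_rows _ _ => p.
all: rewrite /segment_rows /segment_cycle off_succ -[in off p](subrK 1 p) off_succ.
all: case: (p - 1 - r) => b bN /=; have [near bal] := segment_offsets m_small bN.
- exact: near.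
- exact: bal.
Qed.

Lemma segment_rows_zigzag (P : 'I_N -> bool) :
  zigzag (fun x => P (inZp x)) i m -> forall p, segment_rows p -> P p.
Proof.
case=> P0 Podd Pend p Jp.
have -> : p = inZp (i + off p) by rewrite -Zp_nat natrD !Zp_nat valZpK addrC subrK.
move: Jp; rewrite /segment_rows /segment_cycle => /or3P[/andP[oo ol]|/eqP->|/eqP->].
- have := odd_double_half (off p); rewrite oo => oE.
  by rewrite -oE add1n; apply: Podd; lia.
- by rewrite addn0.
have -> : inZp (i + (m.*2.+2 %% N)) = inZp (i + m.*2.+2) :> 'I_N.
  by apply: val_inj; rewrite /= modnDmr.
exact: Pend.
Qed.

Lemma zero_forcing_set_no_thin_zigzag S : zero_forcing_set adj S ->
  ~ zigzag (fun x => thin_row S (inZp x)) i m.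
Proof.
move=> zfS zz.
have Fne : rows_fort S segment_cycle segment_rows != set0.
  by apply/set0Pn; exists (r, k_s); rewrite inE /= /segment_rows subrr eqxx orbT.
have := zero_forcing_set_meets_fort (@segment_fort S) zfS Fne.
by rewrite (rows_fort_disjoint zfS segment_cycle_sub_rows (segment_rows_zigzag zz)).
Qed.
End Segments.

Lemma zero_forcing_set_card n (S : {set Hn_vertex n.+3}) :
  ~~ odd n.+3 -> zero_forcing_set (@Hn_adj n.+3) S -> 5 * n.+3 <= 2 * #|S|.
Proof.
move=> n_even zfS.
pose G x := thin_row S (inZp x : 'I_n.+3).
have G_periodic x : G (x + n.+3) = G x.
  by rewrite /G; congr thin_row; apply: val_inj; rewrite /= modnDr.
have := zigzag_free_count G_periodic isT n_even
  (fun i m hm => zero_forcing_set_no_thin_zigzag hm zfS).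
have -> : \sum_(j < n.+3) G j = \sum_(p < n.+3) thin_row S p.
  by apply: eq_bigr => p _; rewrite /G valZpK.
have : \sum_(p < n.+3) 3 <= \sum_(p < n.+3) (row_count S p + thin_row S p).
  by apply: leq_sum => p _; exact: row_count_thin.
rewrite big_split sum_nat_const card_ord -card_row_count /=; lia.
Qed.

Local Open Scope ring_scope.

Theorem proposition2 (n : nat) (hn6 : (6 <= n)%N) (hdiv : (6 %| n)%N) :
  (5%:R / 12%:R : rat) <= (zf_number (@Hn_adj n))%:R / (#|Hn_vertex n|)%:R.
Proof.
have [k nE] : exists k, n = k.+3 by exists (n - 3)%N; lia.
subst n; have k_even : ~~ odd k.+3 by move: hdiv => /dvdnP[q ->]; rewrite oddM andbF.
have card_V : #|Hn_vertex k.+3| = (k.+3 * 6)%N by rewrite card_prod !card_ord.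
have zf_bound : (5 * k.+3 <= 2 * zf_number (@Hn_adj k.+3))%N.
  rewrite /zf_number; apply: (big_ind (fun x => 5 * k.+3 <= 2 * x)%N).
  - by rewrite card_V; lia.
  - by move=> x y hx hy; rewrite /minn; case: ifP.
  - by move=> S; apply: zero_forcing_set_card.
have V_gt0 : 0 < (k.+3 * 6)%:R :> rat by rewrite ltr0n.
have twelve_gt0 : 0 < 12%:R :> rat by rewrite ltr0n.
rewrite card_V (ler_pdivlMr _ _ V_gt0) mulrAC (ler_pdivrMr _ _ twelve_gt0).
by move: zf_bound; rewrite -(ler_nat rat) !natrM; lra.
Qed.
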